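(* For every $l\ge 9$, the graph $C_l\uplus Q(2,2,2)$ has a dispersed $4$-placement.
   Context: $H_1\uplus H_2$ denotes the vertex-disjoint union. $Q(n_1,\dots,n_t)$ ($1\le n_1\le\cdots\le n_t$) is the tree obtained from the star with centre $v$ and $t$ leaves by replacing each leaf with a path $P_{n_i}=v^i_1v^i_2\cdots v^i_{n_i}$, where $v$ is adjacent to $v^i_1$; so $Q(2,2,2)$ is the spider with three legs of length 2 (7 vertices). For a graph $H$ on $m$ vertices, a $k$-placement of $H$ is a $k$-tuple $(\phi_1,\dots,\phi_k)$ of bijections $\phi_i:V(H)\to V(K_m)$ with pairwise disjoint edge sets $\phi_i(E(H))$; it is dispersed if $\phi_i(v)\ne\phi_j(v)$ for every vertex $v$ and all $i\ne j$. *)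

From mathcomp Require Import all_boot all_order all_fingroup.
Set Implicit Arguments. Unset Strict Implicit. Unset Printing Implicit Defensive.

(* A (simple) graph H on m vertices is given by a symmetric adjacency
   relation on the vertex type 'I_m. *)

Definition cycle_graph (l : nat) : rel 'I_l :=
  fun u v => ((u.+1 %% l) == v) || ((v.+1 %% l) == u).

(* Spider Q(n_1,...,n_t): vertex 0 is the centre v; leg i occupies the
   consecutive vertices 1 + (n_1+...+n_{i-1}), ..., (n_1+...+n_i), listed
   as v^i_1, ..., v^i_{n_i}. *)
Definition leg_start (ns : seq nat) (k : nat) : bool :=
  has (fun i => k == (sumn (take i ns)).+1) (iota 0 (size ns)).

Definition spider_adj (ns : seq nat) (u v : nat) : bool :=
  ((u == 0) && leg_start ns v) || [&& v == u.+1, 0 < u & ~~ leg_start ns v].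

Definition spider (ns : seq nat) : rel 'I_(sumn ns).+1 :=
  fun u v => spider_adj ns u v || spider_adj ns v u.

Arguments cycle_graph : clear implicits.
Arguments spider : clear implicits.

Definition Q222 : rel 'I_7 := spider [:: 2; 2; 2].

Definition gunion (m1 m2 : nat) (e1 : rel 'I_m1) (e2 : rel 'I_m2)
  : rel 'I_(m1 + m2) :=
  fun x y => match split x, split y with
             | inl a, inl b => e1 a b
             | inr a, inr b => e2 a b
             | _, _ => false
             end.

Definition placement (m k : nat) (e : rel 'I_m) (phi : 'I_k -> {perm 'I_m}) : Prop :=
  forall i j : 'I_k, i != j ->
  forall u v x y : 'I_m, e u v -> e x y ->
    [set phi i u; phi i v] != [set phi j x; phi j y].

Definition dispersed (m k : nat) (phi : 'I_k -> {perm 'I_m}) : Prop :=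
  forall i j : 'I_k, i != j -> forall v : 'I_m, phi i v != phi j v.

From mathcomp Require Import all_boot all_order all_fingroup.
From mathcomp Require Import zify.
Set Implicit Arguments. Unset Strict Implicit. Unset Printing Implicit Defensive.

(* All four maps are translates phi_i = g + i (mod l + 7) of one labelling g
   of the vertices by Z_(l+7); they are then automatically dispersed, and they
   form a placement as soon as no edge of g(H) translated by 1, 2 or 3 is again
   an edge of g(H).  The cycle is labelled by j |-> j + (4, 5, 1, 6)_(j mod 4):
   the images of its edges have lengths 2, 3, 6, 1 according to j mod 4, with
   lower endpoints all in one residue class mod 4, so that a translate by 1, 2
   or 3 is never an image edge of the same length.  The spider takes the seven
   remaining labels, chosen according to l mod 4 so that the edges near the
   wrap-around of the cycle and those of the spider also avoid all translates. *)

Lemma eq_set2 (T : finType) (a b c d : T) :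
  [set a; b] = [set c; d] -> (a = c /\ b = d) \/ (a = d /\ b = c).
Proof.
move=> E.
have /set2P ha : a \in [set c; d] by rewrite -E set21.
have /set2P hb : b \in [set c; d] by rewrite -E set22.
have /set2P hc : c \in [set a; b] by rewrite E set21.
have /set2P hd : d \in [set a; b] by rewrite E set22.
by case: ha hb hc hd => ? [] ? [] ? [] ?; subst; tauto.
Qed.

Section Rotation.
Variable n : nat.

Definition rot_fun (d : nat) (x : 'I_n) : 'I_n :=
  Ordinal (ltn_pmod (x + d) (leq_ltn_trans (leq0n x) (ltn_ord x))).

Lemma rot_fun_inj d : injective (rot_fun d).
Proof.
move=> x y /(congr1 val) /= /eqP; rewrite eqn_modDr !modn_small // => /eqP.
exact: val_inj.
Qed.

Definition rot (d : nat) : {perm 'I_n} := perm (@rot_fun_inj d).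

Lemma rotE d x : val (rot d x) = (x + d) %% n.
Proof. by rewrite permE. Qed.

Lemma rot_eq (i j : nat) (a b : 'I_n) :
  i <= j -> rot i a = rot j b -> (b + (j - i)) %% n = a.
Proof.
move=> le_ij /(congr1 val) /eqP; rewrite !rotE -{1}(subnK le_ij) addnA eqn_modDr.
by rewrite (modn_small (ltn_ord a)) => /eqP.
Qed.

End Rotation.

Section CyclicPlacement.
Variables (n k : nat) (e : rel 'I_n) (g : {perm 'I_n}).

Definition cyclic_placement (i : 'I_k) : {perm 'I_n} := (g * rot n i)%g.

Lemma cyclic_placement_dispersed : k <= n -> dispersed cyclic_placement.
Proof.
move=> le_kn i j neq_ij v; apply: contra neq_ij => /eqP /(congr1 val).
by rewrite !permM !rotE => /eqP; rewrite eqn_modDl !modn_small ?(leq_trans _ le_kn).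
Qed.

Hypothesis e_sym : symmetric e.
Hypothesis shift_free : forall (d : nat) (u v x y : 'I_n), 0 < d < k ->
  e u v -> e x y -> ~ ((g u + d) %% n = g x /\ (g v + d) %% n = g y).

Lemma cyclic_placementP : placement e cyclic_placement.
Proof.
move=> i j neq_ij u v x y huv hxy.
wlog lt_ij : i j u v x y neq_ij huv hxy / i < j => [hwlog|].
  case: (ltngtP i j) => [lt_ij|lt_ji|/val_inj eq_ij]; first exact: hwlog.
    by rewrite eq_sym; apply: hwlog; rewrite // eq_sym.
  by rewrite eq_ij eqxx in neq_ij.
have lt_d : 0 < j - i < k by have := ltn_ord j; lia.
apply/eqP; rewrite !permM => /eq_set2 [[eq_ux eq_vy]|[eq_uy eq_vx]].
- apply: (shift_free lt_d hxy huv).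
  by split; [exact: rot_eq (ltnW lt_ij) eq_ux | exact: rot_eq (ltnW lt_ij) eq_vy].
- have hyx : e y x by rewrite e_sym.
  apply: (shift_free lt_d hyx huv).
  by split; [exact: rot_eq (ltnW lt_ij) eq_uy | exact: rot_eq (ltnW lt_ij) eq_vx].
Qed.

End CyclicPlacement.

(* Vertex [l + k] of C_l ⊎ Q(2,2,2) is vertex [k] of the spider. *)
Definition cycle_arc (l a b : nat) : Prop :=
  a + 1 < l /\ b = a + 1 \/ a = l.-1 /\ b = 0.

Definition spider_arc (l a b : nat) : Prop :=
  a = l /\ b = l + 1 \/ a = l /\ b = l + 3 \/ a = l /\ b = l + 5 \/
  a = l + 1 /\ b = l + 2 \/ a = l + 3 /\ b = l + 4 \/ a = l + 5 /\ b = l + 6.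

Definition cycle_label (j : nat) : nat := j + nth 0 [:: 4; 5; 1; 6] (j %% 4).

Definition spider_label (l k : nat) : nat :=
  nth 0 (match l %% 4 with
         | 0 => [:: 0; 1; 5; 2; l + 4; l + 3; l + 6]
         | 1 => [:: 0; 1; 5; 2; l + 6; l + 2; l + 5]
         | 2 => [:: 0; 1; 5; 2; l + 6; l + 1; l + 5]
         | _ => [:: 0; 1; l + 4; 2; l + 6; 5; l + 5]
         end) k.

Definition label (l v : nat) : nat :=
  if v < l then cycle_label v else spider_label l (v - l).

Lemma cycle_labelS a : exists q,
  a = 4 * q /\ cycle_label a = a + 4 /\ cycle_label (a + 1) = a + 6 \/
  a = 4 * q + 1 /\ cycle_label a = a + 5 /\ cycle_label (a + 1) = a + 2 \/
  a = 4 * q + 2 /\ cycle_label a = a + 1 /\ cycle_label (a + 1) = a + 7 \/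
  a = 4 * q + 3 /\ cycle_label a = a + 6 /\ cycle_label (a + 1) = a + 5.
Proof.
exists (a %/ 4); rewrite /cycle_label -(modnDml a 1).
move: (divn_eq a 4) (ltn_pmod a (isT : 0 < 4)).
case: (a %% 4) => [|[|[|[|//]]]] /=; move: (a %/ 4) => q; lia.
Qed.

Lemma label_cycle l a : a < l -> label l a = cycle_label a.
Proof. by rewrite /label => ->. Qed.

Lemma label_spider l k : label l (l + k) = spider_label l k.
Proof. by rewrite /label ltnNge leq_addr /= addKn. Qed.

Lemma label_centre l : label l l = 0.
Proof.
by rewrite -[X in label _ X]addn0 label_spider /spider_label; case: (l %% 4) => [|[|[|]]].
Qed.

Lemma mod4_cases l : l %% 4 = 0 \/ l %% 4 = 1 \/ l %% 4 = 2 \/ l %% 4 = 3.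
Proof. lia. Qed.

(* [label l a + d = label l b (mod l + 7)], given that labels are below [l + 7] and [d < l + 7]. *)
Definition shifted (l d a b : nat) : Prop :=
  label l a + d = label l b \/ label l a + d = label l b + (l + 7).

Definition shift_free_arcs (l : nat) (arc1 arc2 : nat -> nat -> Prop) : Prop :=
  forall d a b x y, 0 < d < 4 -> arc1 a b -> arc2 x y ->
  ~ (shifted l d a x /\ shifted l d b y) /\ ~ (shifted l d a y /\ shifted l d b x).

Ltac unfold_labels l :=
  rewrite /shifted ?label_centre ?label_spider ?label_cycle //;
  (match goal with |- context [spider_label] =>
     rewrite /spider_label; case: (mod4_cases l) => [|[|[|]]] /[dup] ? -> /= | _ => idtac end).

Lemma cycle_arcs_shift_free l : 9 <= l -> shift_free_arcs l (cycle_arc l) (cycle_arc l).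
Proof.
move=> hl d a b x y hd hab hxy; have hl1 : l.-1 < l by lia.
case: hab => [[ha ->]|[-> ->]]; case: hxy => [[hx ->]|[-> ->]]; unfold_labels l;
  try (have [?] := cycle_labelS l.-1); try (have [?] := cycle_labelS a);
  try (have [?] := cycle_labelS x); try (have : cycle_label 0 = 4 by []); lia.
Qed.

Lemma cycle_spider_shift_free l : 9 <= l -> shift_free_arcs l (cycle_arc l) (spider_arc l).
Proof.
move=> hl d a b x y hd hab hxy; have hl1 : l.-1 < l by lia.
case: hab => [[ha ->]|[-> ->]];
case: hxy => [[-> ->]|[[-> ->]|[[-> ->]|[[-> ->]|[[-> ->]|[-> ->]]]]]]; unfold_labels l;
  try (have [?] := cycle_labelS l.-1); try (have [?] := cycle_labelS a);
  try (have : cycle_label 0 = 4 by []); lia.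
Qed.

Lemma spider_cycle_shift_free l : 9 <= l -> shift_free_arcs l (spider_arc l) (cycle_arc l).
Proof.
move=> hl d a b x y hd hab hxy; have hl1 : l.-1 < l by lia.
case: hxy => [[hx ->]|[-> ->]];
case: hab => [[-> ->]|[[-> ->]|[[-> ->]|[[-> ->]|[[-> ->]|[-> ->]]]]]]; unfold_labels l;
  try (have [?] := cycle_labelS l.-1); try (have [?] := cycle_labelS x);
  try (have : cycle_label 0 = 4 by []); lia.
Qed.

Lemma spider_arcs_shift_free l : 9 <= l -> shift_free_arcs l (spider_arc l) (spider_arc l).
Proof.
move=> hl d a b x y hd hab hxy.
case: hab => [[-> ->]|[[-> ->]|[[-> ->]|[[-> ->]|[[-> ->]|[-> ->]]]]]];
case: hxy => [[-> ->]|[[-> ->]|[[-> ->]|[[-> ->]|[[-> ->]|[-> ->]]]]]]; unfold_labels l; lia.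
Qed.

Ltac spider_label_of l k hk :=
  rewrite /spider_label; case: (mod4_cases l) => [|[|[|]]] /[dup] ? ->;
  move: hk; case: k => [|[|[|[|[|[|[|//]]]]]]] _ /=.

Lemma label_lt l v : v < l + 7 -> label l v < l + 7.
Proof.
move=> hv; case: (ltnP v l) => [lt_vl|le_lv].
  by rewrite label_cycle //; have [q] := cycle_labelS v; lia.
have hk : v - l < 7 by lia.
rewrite -(subnKC le_lv) label_spider; spider_label_of l (v - l) hk; lia.
Qed.

Lemma label_inj l v w : 9 <= l -> v < l + 7 -> w < l + 7 -> label l v = label l w -> v = w.
Proof.
move=> hl hv hw; case: (ltnP v l) => [lt_vl|le_lv]; case: (ltnP w l) => [lt_wl|le_lw].
- by rewrite !label_cycle //; have [q] := cycle_labelS v; have [r] := cycle_labelS w; lia.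
- have hk : w - l < 7 by lia.
  rewrite label_cycle // -(subnKC le_lw) label_spider; have [q] := cycle_labelS v.
  spider_label_of l (w - l) hk; lia.
- have hk : v - l < 7 by lia.
  rewrite (label_cycle lt_wl) -(subnKC le_lv) label_spider; have [q] := cycle_labelS w.
  spider_label_of l (v - l) hk; lia.
- have hkv : v - l < 7 by lia.
  have hkw : w - l < 7 by lia.
  rewrite -(subnKC le_lv) -(subnKC le_lw) !label_spider.
  spider_label_of l (v - l) hkv; move: hkw; case: (w - l) => [|[|[|[|[|[|[|//]]]]]]] _ /=; lia.
Qed.

Definition union_arc (l a b : nat) : Prop := cycle_arc l a b \/ spider_arc l a b.

Lemma union_arcs_shift_free l : 9 <= l -> shift_free_arcs l (union_arc l) (union_arc l).
Proof.
move=> hl d a b x y hd [hab|hab] [hxy|hxy].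
- exact: cycle_arcs_shift_free.
- exact: cycle_spider_shift_free.
- exact: spider_cycle_shift_free.
- exact: spider_arcs_shift_free.
Qed.

Lemma cycle_graph_arc l (a b : 'I_l) :
  cycle_graph l a b -> cycle_arc l a b \/ cycle_arc l b a.
Proof.
have arc (x y : 'I_l) : x.+1 %% l = y -> cycle_arc l x y.
  rewrite /cycle_arc; case: (ltnP x.+1 l) => [lt_xl|le_lx].
    by rewrite modn_small // => <-; lia.
  have x_last : x.+1 = l by have := ltn_ord x; lia.
  by rewrite x_last modnn => <-; lia.
by case/orP=> /eqP /arc; [left|right].
Qed.

Lemma Q222_arc l (a b : 'I_7) :
  Q222 a b -> spider_arc l (l + a) (l + b) \/ spider_arc l (l + b) (l + a).
Proof.
case: a b => a ha [b hb]; rewrite /Q222 /spider /spider_adj /leg_start /= /spider_arc.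
by move: ha hb; do 8?[case: a => [|a] //]; do 8?[case: b => [|b] //] => _ _ /=; lia.
Qed.

Lemma gunion_arc l (u v : 'I_(l + 7)) :
  gunion (cycle_graph l) Q222 u v -> union_arc l u v \/ union_arc l v u.
Proof.
rewrite /gunion /union_arc; case: splitP => a ->; case: splitP => b -> //.
- by case/cycle_graph_arc; tauto.
- by case/(Q222_arc l); tauto.
Qed.

Lemma gunion_sym m1 m2 (e1 : rel 'I_m1) (e2 : rel 'I_m2) :
  symmetric e1 -> symmetric e2 -> symmetric (gunion e1 e2).
Proof. by move=> sym1 sym2 x y; rewrite /gunion; case: split; case: split. Qed.

Definition label_fun l (v : 'I_(l + 7)) : 'I_(l + 7) := Ordinal (label_lt (ltn_ord v)).

Lemma label_fun_inj l : 9 <= l -> injective (@label_fun l).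
Proof.
by move=> hl v w /(congr1 val) /(label_inj hl (ltn_ord v) (ltn_ord w)) /val_inj.
Qed.

Definition label_perm l (hl : 9 <= l) : {perm 'I_(l + 7)} := perm (label_fun_inj hl).

Lemma modn_wrap a b n : a < n + n -> b < n -> a %% n = b -> a = b \/ a = b + n.
Proof.
move=> ha hb; case: (ltnP a n) => [lt_an|le_na]; first by rewrite modn_small // => ->; left.
rewrite -(subnK le_na) modnDr modn_small; last by lia.
by move=> <-; right.
Qed.

Lemma label_perm_shift_free l (hl : 9 <= l) d (u v x y : 'I_(l + 7)) :
  0 < d < 4 -> gunion (cycle_graph l) Q222 u v -> gunion (cycle_graph l) Q222 x y ->
  ~ ((label_perm hl u + d) %% (l + 7) = label_perm hl x /\
     (label_perm hl v + d) %% (l + 7) = label_perm hl y).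
Proof.
rewrite !permE /= => hd /gunion_arc huv /gunion_arc hxy [].
have wrap (a b : 'I_(l + 7)) :
    (label l a + d) %% (l + 7) = label l b -> shifted l d a b.
  apply: modn_wrap; last exact: label_lt.
  by have := label_lt (ltn_ord a); lia.
move=> /wrap sh_ux /wrap sh_vy.
have := union_arcs_shift_free hl hd; case: huv => huv; case: hxy => hxy.
all: by move=> /(_ _ _ _ _ huv hxy); tauto.
Qed.

Theorem lemma2p7 (l : nat) (hl : 9 <= l) :
  exists phi : 'I_4 -> {perm 'I_(l + 7)},
    placement (gunion (cycle_graph l) Q222) phi /\ dispersed phi.
Proof.
exists (cyclic_placement (label_perm hl)); split.
- apply: cyclic_placementP; last exact: label_perm_shift_free.
  by apply: gunion_sym => u v; rewrite /cycle_graph /Q222 /spider orbC.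
- by apply: cyclic_placement_dispersed; lia.
Qed.
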